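(* Let $(\mathcal{C},\mathsf{I},\otimes,\lambda,\rho,\alpha)$ be a monoidal category with finite products, $\mathsf{T}=(T,\eta,\mu)$ a monoid in it, and $(\mathcal{E},\mathcal{M})$ an orthogonal factorization system on $\mathcal{C}$ such that: $\mathcal{E}$ is closed under $(-)\otimes S$ for every object $(S,s)$ of $\mathcal{M}/T$; the skew monoidal category $\mathcal{M}/\mathsf{T}=(\mathcal{M}/T,\mathsf{J},\boxdot)$ is monoidal; $\mathcal{E}$ contains all canonical morphisms $\langle\pi_i\otimes Y\rangle_i : (\prod_i X_i)\otimes Y\to\prod_i(X_i\otimes Y)$; and $\mathcal{E}$ is closed under finite products. Let $\phi:T^n\to T$ be an $n$-ary algebraic operation for $\mathsf{T}$ and let $(R_1,r_1),\dots,(R_n,r_n),(R',r')$ be objects of $\mathcal{M}/T$. Then there is a bijection between (1) morphisms $p:\prod_i R_i\to R'$ of $\mathcal{C}$ such that $r'\circ p = \phi\circ\prod_i r_i$, and (2) $(R_1,\dots,R_n;R')$-ary algebraic operations $\psi$ for the graded monoid $T_{\mathcal{M}}:\mathcal{M}/\mathsf{T}\to\mathcal{C}$ that grade $\phi$.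
   Context: Orthogonal factorization system $(\mathcal{E},\mathcal{M})$: both classes contain isomorphisms and are closed under composition; every commuting square $g e = m f$ with $e\in\mathcal{E}$, $m\in\mathcal{M}$ has a unique diagonal $d$ ($de=f$, $md=g$); every morphism factors as $m\circ e$. A monoid: $\eta:\mathsf{I}\to T$, $\mu:T\otimes T\to T$ with the usual unit and associativity laws. $\mathcal{M}/T$: objects $(S,s)$ with $s:S\to T$ in $\mathcal{M}$; morphisms $f:(S,s)\to(S',s')$ with $s'f=s$. Factor $\eta=j\circ q$ with $q:\mathsf{I}\to\mathsf{J}$ in $\mathcal{E}$, $j$ in $\mathcal{M}$; factor $\mu\circ(s\otimes s')=(s\boxdot s')\circ q_{S,S'}$ with $q_{S,S'}:S\otimes S'\to S\boxdot S'$ in $\mathcal{E}$, $s\boxdot s'$ in $\mathcal{M}$. This gives a skew monoidal structure $(\mathcal{M}/T,(\mathsf{J},j),\boxdot)$, denoted $\mathcal{M}/\mathsf{T}$, whose action on morphisms and structure maps are the unique diagonals compatible with the $q$'s and the structure maps of $\mathcal{C}$; in particular $f\boxdot f'$ satisfies $(f\boxdot f')q_{S_1,S_1'}=q_{S_2,S_2'}(f\otimes f')$, the right unitor is $r_S = q_{S,\mathsf{J}}\circ(S\otimes q)\circ\rho_S$, and the associator $a$ satisfies $a\, q_{S\boxdot S',S''}(q_{S,S'}\otimes S'') = q_{S,S'\boxdot S''}(S\otimes q_{S',S''})\alpha_{S,S',S''}$. The graded monoid (lax monoidal functor) $T_{\mathcal{M}}:\mathcal{M}/\mathsf{T}\to\mathcal{C}$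 sends $(S,s)\mapsto S$ with unit $q$ and multiplication $q_{S,S'}$. An $n$-ary algebraic operation for $\mathsf{T}$ is $\phi:T^n\to T$ with $\phi\circ\mu^n\circ\langle\pi_i\otimes T\rangle_i = \mu\circ(\phi\otimes T) : T^n\otimes T\to T$. For a lax monoidal functor $(G,\eta^G,\mu^G):(\mathcal{G},I,\odot)\to\mathcal{C}$ from a monoidal category with associator $\alpha^{\mathcal{G}}$, a $(d_1,\dots,d_n;d')$-ary algebraic operation is a natural family $\psi_e:\prod_i G(d_i\odot e)\to G(d'\odot e)$ ($e\in\mathcal{G}$) such that for all $e,e'$: $\psi_{e\odot e'}\circ\prod_i G(\alpha^{\mathcal{G}})\circ\prod_i\mu^G_{d_i\odot e,e'}\circ\langle\pi_i\otimes Ge'\rangle_i = G(\alpha^{\mathcal{G}})\circ\mu^G_{d'\odot e,e'}\circ(\psi_e\otimes Ge')$. Given a grading with $\mathcal{M}$-components $g_d:Gd\to T$ (a monoidal transformation), $\psi$ grades $\phi$ if $g_{d'\odot e}\circ\psi_e = \phi\circ\prod_i g_{d_i\odot e}$ for all $e$; for $T_{\mathcal{M}}$, $g_{(S,s)}=s$. *)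

From mathcomp Require Import all_boot.
Set Implicit Arguments. Unset Strict Implicit. Unset Printing Implicit Defensive.

Record category := Category {
  ob :> Type;
  hom : ob -> ob -> Type;
  idm : forall A, hom A A;
  comp : forall A B C, hom B C -> hom A B -> hom A C;
  comp_assoc : forall A B C D (h : hom C D) (g : hom B C) (f : hom A B),
      comp h (comp g f) = comp (comp h g) f;
  comp_id_l : forall A B (f : hom A B), comp (idm B) f = f;
  comp_id_r : forall A B (f : hom A B), comp f (idm A) = f
}.
Arguments hom {c} : rename.
Arguments idm {c} A : rename.
Arguments comp {c A B C} : rename.
Notation "g ∘ f" := (comp g f) (at level 40, left associativity).

Definition is_iso (C : category) (A B : C) (f : hom A B) : Prop :=
  exists g : hom B A, g ∘ f = idm A /\ f ∘ g = idm B.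

Record monoidal (C : category) := Monoidal {
  tens0 : C -> C -> C;
  tens1 : forall A B A' B', hom A A' -> hom B B' -> hom (tens0 A B) (tens0 A' B');
  munit : C;
  lam : forall A, hom (tens0 munit A) A;
  lam_inv : forall A, hom A (tens0 munit A);
  rho : forall A, hom (tens0 A munit) A;
  rho_inv : forall A, hom A (tens0 A munit);
  alpha : forall A B D, hom (tens0 (tens0 A B) D) (tens0 A (tens0 B D));
  alpha_inv : forall A B D, hom (tens0 A (tens0 B D)) (tens0 (tens0 A B) D);
  tens1_id : forall A B, tens1 (idm A) (idm B) = idm (tens0 A B);
  tens1_comp : forall A1 A2 A3 B1 B2 B3 (f : hom A1 A2) (g : hom A2 A3)
      (f' : hom B1 B2) (g' : hom B2 B3),
      tens1 (g ∘ f) (g' ∘ f') = tens1 g g' ∘ tens1 f f';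
  lam_iso1 : forall A, lam_inv A ∘ lam A = idm _;
  lam_iso2 : forall A, lam A ∘ lam_inv A = idm _;
  rho_iso1 : forall A, rho_inv A ∘ rho A = idm _;
  rho_iso2 : forall A, rho A ∘ rho_inv A = idm _;
  alpha_iso1 : forall A B D, alpha_inv A B D ∘ alpha A B D = idm _;
  alpha_iso2 : forall A B D, alpha A B D ∘ alpha_inv A B D = idm _;
  lam_nat : forall A B (f : hom A B), f ∘ lam A = lam B ∘ tens1 (idm munit) f;
  rho_nat : forall A B (f : hom A B), f ∘ rho A = rho B ∘ tens1 f (idm munit);
  alpha_nat : forall A A' B B' D D' (f : hom A A') (g : hom B B') (h : hom D D'),
      alpha A' B' D' ∘ tens1 (tens1 f g) h = tens1 f (tens1 g h) ∘ alpha A B D;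
  triangle : forall A B,
      tens1 (idm A) (lam B) ∘ alpha A munit B = tens1 (rho A) (idm B);
  pentagon : forall A B D E,
      alpha A B (tens0 D E) ∘ alpha (tens0 A B) D E
      = tens1 (idm A) (alpha B D E) ∘ alpha A (tens0 B D) E
        ∘ tens1 (alpha A B D) (idm E)
}.
Arguments tens0 {C} m : rename.
Arguments tens1 {C} m {A B A' B'} : rename.
Arguments munit {C} m : rename.
Arguments lam {C} m A : rename.
Arguments rho {C} m A : rename.
Arguments rho_inv {C} m A : rename.
Arguments alpha {C} m A B D : rename.

Record fin_products (C : category) := FinProducts {
  prodo : forall n, ('I_n -> C) -> C;
  proj : forall n (X : 'I_n -> C) (i : 'I_n), hom (prodo X) (X i);
  tuple : forall n (X : 'I_n -> C) (A : C), (forall i, hom A (X i)) -> hom A (prodo X);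
  proj_tuple : forall n (X : 'I_n -> C) A (f : forall i, hom A (X i)) i,
      proj X i ∘ tuple f = f i;
  tuple_unique : forall n (X : 'I_n -> C) A (f : forall i, hom A (X i)) (h : hom A (prodo X)),
      (forall i, proj X i ∘ h = f i) -> h = tuple f
}.
Arguments prodo {C} p {n} X : rename.
Arguments proj {C} p {n} X i : rename.
Arguments tuple {C} p {n X A} f : rename.

Section Derived.
Variables (C : category) (MC : monoidal C) (PC : fin_products C).
Local Notation "A ⊗ B" := (tens0 MC A B) (at level 35).
Local Notation "f ⊗⊗ g" := (tens1 MC f g) (at level 35).

Definition prodmap n (X Y : 'I_n -> C) (f : forall i, hom (X i) (Y i))
  : hom (prodo PC X) (prodo PC Y) := tuple PC (fun i => f i ∘ proj PC X i).

Definition canon n (X : 'I_n -> C) (Y : C)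
  : hom (prodo PC X ⊗ Y) (prodo PC (fun i => X i ⊗ Y)) :=
  tuple PC (fun i => proj PC X i ⊗⊗ idm Y).

Definition powo (T : C) (n : nat) : C := prodo PC (fun _ : 'I_n => T).
End Derived.

Record monoid (C : category) (MC : monoidal C) := Monoid {
  mT : C;
  meta : hom (munit MC) mT;
  mmu : hom (tens0 MC mT mT) mT;
  munit_l : mmu ∘ tens1 MC meta (idm mT) = lam MC mT;
  munit_r : mmu ∘ tens1 MC (idm mT) meta = rho MC mT;
  massoc : mmu ∘ tens1 MC mmu (idm mT)
           = mmu ∘ tens1 MC (idm mT) mmu ∘ alpha MC mT mT mT
}.
Arguments mT {C MC} m : rename.
Arguments meta {C MC} m : rename.
Arguments mmu {C MC} m : rename.

Record ofs (C : category) := OFS {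
  Ecl : forall A B : C, hom A B -> Prop;
  Mcl : forall A B : C, hom A B -> Prop;
  E_iso : forall A B (f : hom A B), is_iso f -> Ecl f;
  M_iso : forall A B (f : hom A B), is_iso f -> Mcl f;
  E_comp : forall A B D (f : hom A B) (g : hom B D), Ecl f -> Ecl g -> Ecl (g ∘ f);
  M_comp : forall A B D (f : hom A B) (g : hom B D), Mcl f -> Mcl g -> Mcl (g ∘ f);
  diag_unique : forall A B X Y (e : hom A B) (m : hom X Y) (f : hom A X) (g : hom B Y),
      Ecl e -> Mcl m -> g ∘ e = m ∘ f ->
      exists! d : hom B X, d ∘ e = f /\ m ∘ d = g;
  fobj : forall A B, hom A B -> C;
  fe : forall A B (f : hom A B), hom A (fobj f);
  fm : forall A B (f : hom A B), hom (fobj f) B;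
  fe_E : forall A B (f : hom A B), Ecl (fe f);
  fm_M : forall A B (f : hom A B), Mcl (fm f);
  fact_eq : forall A B (f : hom A B), fm f ∘ fe f = f
}.
Arguments Ecl {C} o {A B} : rename.
Arguments Mcl {C} o {A B} : rename.
Arguments fobj {C} o {A B} : rename.
Arguments fe {C} o {A B} : rename.
Arguments fm {C} o {A B} : rename.
Arguments fm_M {C} o {A B} : rename.

Section Slice.
Variables (C : category) (MC : monoidal C) (PC : fin_products C)
          (F : ofs C) (Tm : monoid MC).
Local Notation "A ⊗ B" := (tens0 MC A B) (at level 35).
Local Notation "f ⊗⊗ g" := (tens1 MC f g) (at level 35).
Local Notation T := (mT Tm).

Record sobj := SObj { sob : C; sarr : hom sob T; sarr_M : Mcl F sarr }.

Definition is_smor (S S' : sobj) (f : hom (sob S) (sob S')) : Prop :=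
  sarr S' ∘ f = sarr S.

Definition Jobj : sobj := @SObj (fobj F (meta Tm)) (fm F (meta Tm)) (fm_M F (meta Tm)).
Definition qJ : hom (munit MC) (sob Jobj) := fe F (meta Tm).

Definition box (S S' : sobj) : sobj :=
  @SObj (fobj F (mmu Tm ∘ (sarr S ⊗⊗ sarr S')))
        (fm F (mmu Tm ∘ (sarr S ⊗⊗ sarr S')))
        (fm_M F (mmu Tm ∘ (sarr S ⊗⊗ sarr S'))).
Definition qbox (S S' : sobj) : hom (sob S ⊗ sob S') (sob (box S S')) :=
  fe F (mmu Tm ∘ (sarr S ⊗⊗ sarr S')).

(* d is f [.] f' : the unique diagonal with d q = q (f (x) f') in M/T *)
Definition is_boxmap (S1 S2 S1' S2' : sobj) (f : hom (sob S1) (sob S2))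
    (f' : hom (sob S1') (sob S2')) (d : hom (sob (box S1 S1')) (sob (box S2 S2'))) : Prop :=
  d ∘ qbox S1 S1' = qbox S2 S2' ∘ (f ⊗⊗ f') /\ sarr (box S2 S2') ∘ d = sarr (box S1 S1').

(* d is the left unitor l_S : J [.] S -> S (unique diagonal) *)
Definition is_lunitor (S : sobj) (d : hom (sob (box Jobj S)) (sob S)) : Prop :=
  d ∘ (qbox Jobj S ∘ (qJ ⊗⊗ idm (sob S))) = lam MC (sob S) /\ sarr S ∘ d = sarr (box Jobj S).

Definition runitor (S : sobj) : hom (sob S) (sob (box S Jobj)) :=
  qbox S Jobj ∘ (idm (sob S) ⊗⊗ qJ) ∘ rho_inv MC (sob S).

(* d is the associator a : (S [.] S') [.] S'' -> S [.] (S' [.] S'') *)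
Definition is_assoc (S S' S'' : sobj)
    (d : hom (sob (box (box S S') S'')) (sob (box S (box S' S'')))) : Prop :=
  d ∘ qbox (box S S') S'' ∘ (qbox S S' ⊗⊗ idm (sob S''))
    = qbox S (box S' S'') ∘ (idm (sob S) ⊗⊗ qbox S' S'') ∘ alpha MC (sob S) (sob S') (sob S'')
  /\ sarr (box S (box S' S'')) ∘ d = sarr (box (box S S') S'').

Definition slice_is_monoidal : Prop :=
  (forall S d, @is_lunitor S d -> is_iso d) /\
  (forall S, is_iso (runitor S)) /\
  (forall S S' S'' d, @is_assoc S S' S'' d -> is_iso d).

Definition alg_op (n : nat) (phi : hom (powo PC T n) T) : Prop :=
  phi ∘ prodmap PC (fun _ : 'I_n => mmu Tm) ∘ canon MC PC (fun _ : 'I_n => T) T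
  = mmu Tm ∘ (phi ⊗⊗ idm T).

Definition graded_family (n : nat) (R : 'I_n -> sobj) (R' : sobj) : Type :=
  forall e : sobj, hom (prodo PC (fun i => sob (box (R i) e))) (sob (box R' e)).

(* naturality in e (the action of R [.] - on f being the diagonal id [.] f) *)
Definition gf_natural n (R : 'I_n -> sobj) (R' : sobj) (psi : graded_family R R') : Prop :=
  forall (e e' : sobj) (f : hom (sob e) (sob e')), is_smor f ->
  forall (d : forall i, hom (sob (box (R i) e)) (sob (box (R i) e')))
         (d' : hom (sob (box R' e)) (sob (box R' e'))),
    (forall i, is_boxmap (idm (sob (R i))) f (d i)) ->
    is_boxmap (idm (sob R')) f d' ->
    psi e' ∘ prodmap PC d = d' ∘ psi e.

(* the algebraicity equation for the graded monoid T_M (mu^G = q, G(alpha) = a) *)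
Definition gf_algebraic n (R : 'I_n -> sobj) (R' : sobj) (psi : graded_family R R') : Prop :=
  forall (e e' : sobj)
         (a : forall i, hom (sob (box (box (R i) e) e')) (sob (box (R i) (box e e'))))
         (a' : hom (sob (box (box R' e) e')) (sob (box R' (box e e')))),
    (forall i, is_assoc (a i)) -> is_assoc a' ->
    psi (box e e') ∘ prodmap PC a ∘ prodmap PC (fun i => qbox (box (R i) e) e')
      ∘ canon MC PC (fun i => sob (box (R i) e)) (sob e')
    = a' ∘ qbox (box R' e) e' ∘ (psi e ⊗⊗ idm (sob e')).

Definition graded_alg_op n (R : 'I_n -> sobj) (R' : sobj) (psi : graded_family R R') : Prop :=
  gf_natural psi /\ gf_algebraic psi.

(* psi grades phi (grading components g_(S,s) = s) *)
Definition grades n (R : 'I_n -> sobj) (R' : sobj) (psi : graded_family R R')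
    (phi : hom (powo PC T n) T) : Prop :=
  forall e : sobj, sarr (box R' e) ∘ psi e = phi ∘ prodmap PC (fun i => sarr (box (R i) e)).

End Slice.

From mathcomp Require Import all_boot.
From Stdlib Require Import ClassicalEpsilon ProofIrrelevance FunctionalExtensionality.
Set Implicit Arguments. Unset Strict Implicit.

(* Put Q_e := (prod_i q_{R_i,e}) o <pi_i (x) e>_i : (prod_i R_i) (x) e -> prod_i (R_i [.] e),
   which lies in E by the hypotheses on E.  Given p over phi, algebraicity of phi makes the
   square with sides q_{R',e} o (p (x) e) and phi o prod_i s_{R_i [.] e} commute, and psi_e
   is its diagonal; uniqueness of diagonals gives naturality, algebraicity and grading.
   Conversely p := r_{R'}^-1 o psi_J o prod_i r_{R_i}.  Naturality of psi along the left
   unitor l_e, algebraicity at (J, e) and the triangle identity (S [.] l_e) a (r_S [.] e) = 1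
   of M/T give psi_e o Q_e = q_{R',e} o (p (x) e), so both round trips are identities by
   E-M cancellation. *)


Section Composition.
Variable C : category.

Lemma comp_congr2l (A B D X : C) (a : hom B D) (b : hom A B) (c : hom A D) (x : hom D X) :
  a ∘ b = c -> x ∘ a ∘ b = x ∘ c.
Proof. by move=> <-; rewrite comp_assoc. Qed.

Lemma comp_congr3l (A B D E X : C) (a : hom D E) (b : hom B D) (c : hom A B) (d : hom A E)
    (x : hom E X) :
  a ∘ b ∘ c = d -> x ∘ a ∘ b ∘ c = x ∘ d.
Proof. by move=> <-; rewrite !comp_assoc. Qed.

Lemma comp_congr4l (A B D E G X : C) (a : hom E G) (b : hom D E) (c : hom B D) (c' : hom A B)
    (d : hom A G) (x : hom G X) :
  a ∘ b ∘ c ∘ c' = d -> x ∘ a ∘ b ∘ c ∘ c' = x ∘ d.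
Proof. by move=> <-; rewrite !comp_assoc. Qed.

End Composition.

Section FactorizationSystem.
Variables (C : category) (F : ofs C).

Lemma ofs_cancel A B X Y (e : hom A B) (m : hom X Y) (u v : hom B X) :
  Ecl F e -> Mcl F m -> u ∘ e = v ∘ e -> m ∘ u = m ∘ v -> u = v.
Proof.
move=> He Hm Hue Hmu.
have [d [_ d_uniq]] := diag_unique He Hm (esym (comp_assoc m u e)).
by rewrite -(d_uniq u) // (d_uniq v) // Hue Hmu.
Qed.

Section Diagonal.
Variables (A B X Y : C) (e : hom A B) (m : hom X Y) (f : hom A X) (g : hom B Y).
Hypotheses (He : Ecl F e) (Hm : Mcl F m) (Hsq : g ∘ e = m ∘ f).

Definition diag : hom B X :=
  proj1_sig (constructive_definite_description _ (diag_unique He Hm Hsq)).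

Lemma diag_upper : diag ∘ e = f.
Proof. by rewrite /diag; case: constructive_definite_description => d []. Qed.

Lemma diag_lower : m ∘ diag = g.
Proof. by rewrite /diag; case: constructive_definite_description => d []. Qed.

End Diagonal.
End FactorizationSystem.

Section Products.
Variables (C : category) (PC : fin_products C).

Lemma prod_ext n (X : 'I_n -> C) A (h h' : hom A (prodo PC X)) :
  (forall i, proj PC X i ∘ h = proj PC X i ∘ h') -> h = h'.
Proof.
move=> Hh; rewrite (@tuple_unique _ _ _ _ _ (fun i => proj PC X i ∘ h') h) //.
by symmetry; apply: tuple_unique.
Qed.

Lemma proj_prodmap n (X Y : 'I_n -> C) (f : forall i, hom (X i) (Y i)) i :
  proj PC Y i ∘ prodmap PC f = f i ∘ proj PC X i.
Proof. exact: proj_tuple. Qed.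

Lemma prodmap_ext n (X Y : 'I_n -> C) (f g : forall i, hom (X i) (Y i)) :
  (forall i, f i = g i) -> prodmap PC f = prodmap PC g.
Proof. by move=> Efg; apply: prod_ext => i; rewrite !proj_prodmap Efg. Qed.

Lemma prodmap_comp n (X Y Z : 'I_n -> C) (f : forall i, hom (X i) (Y i))
    (g : forall i, hom (Y i) (Z i)) :
  prodmap PC g ∘ prodmap PC f = prodmap PC (fun i => g i ∘ f i).
Proof.
apply: prod_ext => i.
by rewrite comp_assoc !proj_prodmap -comp_assoc proj_prodmap comp_assoc.
Qed.

Lemma prodmap_compl n (X Y Z : 'I_n -> C) W (f : forall i, hom (X i) (Y i))
    (g : forall i, hom (Y i) (Z i)) (x : hom (prodo PC Z) W) :
  x ∘ prodmap PC g ∘ prodmap PC f = x ∘ prodmap PC (fun i => g i ∘ f i).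
Proof. by rewrite -comp_assoc prodmap_comp. Qed.

End Products.

Section Monoidal.
Variables (C : category) (MC : monoidal C).
Local Notation "A ⊗ B" := (tens0 MC A B) (at level 35).
Local Notation "f ⊗⊗ g" := (tens1 MC f g) (at level 35).

Lemma tens1_compl A A' A'' B B' (f : hom A A') (g : hom A' A'') (h : hom B B') :
  (g ∘ f) ⊗⊗ h = (g ⊗⊗ idm B') ∘ (f ⊗⊗ h).
Proof. by rewrite -tens1_comp comp_id_l. Qed.

Lemma tens1_compr A A' B B' B'' (f : hom B B') (g : hom B' B'') (h : hom A A') :
  h ⊗⊗ (g ∘ f) = (idm A' ⊗⊗ g) ∘ (h ⊗⊗ f).
Proof. by rewrite -tens1_comp comp_id_l. Qed.

Lemma tens1_split_lr A A' B B' (f : hom A A') (g : hom B B') :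
  f ⊗⊗ g = (f ⊗⊗ idm B') ∘ (idm A ⊗⊗ g).
Proof. by rewrite -tens1_comp comp_id_l comp_id_r. Qed.

Lemma tens1_split_rl A A' B B' (f : hom A A') (g : hom B B') :
  f ⊗⊗ g = (idm A' ⊗⊗ g) ∘ (f ⊗⊗ idm B).
Proof. by rewrite -tens1_comp comp_id_l comp_id_r. Qed.

Lemma tens1_interchange A A' B B' (f : hom A A') (g : hom B B') :
  (f ⊗⊗ idm B') ∘ (idm A ⊗⊗ g) = (idm A' ⊗⊗ g) ∘ (f ⊗⊗ idm B).
Proof. by rewrite -tens1_split_lr tens1_split_rl. Qed.

Lemma tens1_interchangel A A' B B' X (f : hom A A') (g : hom B B') (x : hom (A' ⊗ B') X) :
  x ∘ (f ⊗⊗ idm B') ∘ (idm A ⊗⊗ g) = x ∘ (idm A' ⊗⊗ g) ∘ (f ⊗⊗ idm B).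
Proof. by rewrite -!comp_assoc tens1_interchange. Qed.

Lemma fuse_tens1_idr A A' A'' B X (f : hom A A') (g : hom A' A'') (x : hom (A'' ⊗ B) X) :
  x ∘ (g ⊗⊗ idm B) ∘ (f ⊗⊗ idm B) = x ∘ ((g ∘ f) ⊗⊗ idm B).
Proof. by rewrite -comp_assoc -tens1_compl. Qed.

Lemma fuse_tens1_idl A B B' B'' X (f : hom B B') (g : hom B' B'') (x : hom (A ⊗ B'') X) :
  x ∘ (idm A ⊗⊗ g) ∘ (idm A ⊗⊗ f) = x ∘ (idm A ⊗⊗ (g ∘ f)).
Proof. by rewrite -comp_assoc -tens1_compr. Qed.

Lemma alpha_nat_l A A' B D X (f : hom A A') (x : hom (A' ⊗ (B ⊗ D)) X) :
  x ∘ (f ⊗⊗ idm (B ⊗ D)) ∘ alpha MC A B D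
  = x ∘ alpha MC A' B D ∘ ((f ⊗⊗ idm B) ⊗⊗ idm D).
Proof. by rewrite -!comp_assoc alpha_nat tens1_id. Qed.

Lemma rho_inv_nat A B (f : hom A B) :
  rho_inv MC B ∘ f = (f ⊗⊗ idm (munit MC)) ∘ rho_inv MC A.
Proof.
rewrite -[RHS]comp_id_l -(rho_iso1 MC B) -comp_assoc (comp_assoc (rho MC B)) -rho_nat.
by rewrite -comp_assoc rho_iso2 comp_id_r.
Qed.

End Monoidal.

Section CanonicalComparison.
Variables (C : category) (MC : monoidal C) (PC : fin_products C).
Local Notation "A ⊗ B" := (tens0 MC A B) (at level 35).
Local Notation "f ⊗⊗ g" := (tens1 MC f g) (at level 35).

Lemma proj_canon n (X : 'I_n -> C) Y i :
  proj PC (fun i => X i ⊗ Y) i ∘ canon MC PC X Y = proj PC X i ⊗⊗ idm Y.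
Proof. exact: proj_tuple. Qed.

Lemma canon_nat n (X X' : 'I_n -> C) Y Y' (f : forall i, hom (X i) (X' i)) (g : hom Y Y') :
  canon MC PC X' Y' ∘ (prodmap PC f ⊗⊗ g)
  = prodmap PC (fun i => f i ⊗⊗ g) ∘ canon MC PC X Y.
Proof.
apply: prod_ext => i.
rewrite !comp_assoc proj_canon proj_prodmap -comp_assoc proj_canon -!tens1_comp.
by rewrite proj_prodmap comp_id_l comp_id_r.
Qed.

Lemma prodmap_idm n (X : 'I_n -> C) : prodmap PC (fun i => idm (X i)) = idm (prodo PC X).
Proof. by apply: prod_ext => i; rewrite proj_prodmap comp_id_l comp_id_r. Qed.

Variables (Tm : monoid MC) (n : nat) (phi : hom (powo PC (mT Tm) n) (mT Tm)).
Hypothesis Hphi : alg_op phi.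
Local Notation mu := (mmu Tm).

Lemma alg_op_nat (X : 'I_n -> C) Y (s : forall i, hom (X i) (mT Tm)) (t : hom Y (mT Tm)) :
  phi ∘ prodmap PC (fun i => mu ∘ (s i ⊗⊗ t)) ∘ canon MC PC X Y
  = mu ∘ ((phi ∘ prodmap PC s) ⊗⊗ t).
Proof.
rewrite -prodmap_comp -!comp_assoc -canon_nat !comp_assoc Hphi.
by rewrite -comp_assoc -tens1_comp comp_id_l.
Qed.

End CanonicalComparison.

Section Slice.
Variables (C : category) (MC : monoidal C) (F : ofs C) (Tm : monoid MC).
Hypothesis HEtens : forall (S : sobj F Tm) (A B : C) (e : hom A B),
  Ecl F e -> Ecl F (tens1 MC e (idm (sob S))).
Local Notation "A ⊗ B" := (tens0 MC A B) (at level 35).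
Local Notation "f ⊗⊗ g" := (tens1 MC f g) (at level 35).
Local Notation mu := (mmu Tm).
Local Notation J := (Jobj F Tm).
Local Notation qJ := (qJ F Tm).

Lemma qbox_E (S S' : sobj F Tm) : Ecl F (qbox S S').
Proof. exact: fe_E. Qed.

Lemma sarr_qbox (S S' : sobj F Tm) : sarr (box S S') ∘ qbox S S' = mu ∘ (sarr S ⊗⊗ sarr S').
Proof. exact: fact_eq. Qed.

Lemma sarr_qJ : sarr J ∘ qJ = meta Tm.
Proof. exact: fact_eq. Qed.

Section BoxRight.
Variables (S e e' : sobj F Tm) (f : hom (sob e) (sob e')) (Hf : is_smor f).

Lemma boxr_square :
  sarr (box S e) ∘ qbox S e = sarr (box S e') ∘ (qbox S e' ∘ (idm (sob S) ⊗⊗ f)).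
Proof. by rewrite comp_assoc !sarr_qbox -comp_assoc -tens1_comp comp_id_r Hf. Qed.

Definition boxr : hom (sob (box S e)) (sob (box S e')) :=
  diag (qbox_E S e) (sarr_M (box S e')) boxr_square.

Lemma boxr_is : is_boxmap (idm (sob S)) f boxr.
Proof. by split; [apply: diag_upper | apply: diag_lower]. Qed.

End BoxRight.

Section Associator.
Variables (S S' S'' : sobj F Tm).

Lemma assoc_E : Ecl F (qbox (box S S') S'' ∘ (qbox S S' ⊗⊗ idm (sob S''))).
Proof. by apply: E_comp; [apply: HEtens; apply: qbox_E | apply: qbox_E]. Qed.

Lemma assoc_square :
  sarr (box (box S S') S'') ∘ (qbox (box S S') S'' ∘ (qbox S S' ⊗⊗ idm (sob S'')))
  = sarr (box S (box S' S''))
    ∘ (qbox S (box S' S'') ∘ (idm (sob S) ⊗⊗ qbox S' S'') ∘ alpha MC _ _ _).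
Proof.
rewrite comp_assoc sarr_qbox -comp_assoc -tens1_comp comp_id_r sarr_qbox tens1_compl.
rewrite !comp_assoc sarr_qbox -(comp_assoc mu (sarr S ⊗⊗ _)) -tens1_comp comp_id_r.
by rewrite sarr_qbox tens1_compr massoc -!comp_assoc alpha_nat.
Qed.

Definition sassoc : hom (sob (box (box S S') S'')) (sob (box S (box S' S''))) :=
  diag assoc_E (sarr_M _) assoc_square.

Lemma sassoc_is : is_assoc sassoc.
Proof. by split; [rewrite -comp_assoc; apply: diag_upper | apply: diag_lower]. Qed.

End Associator.

Section LeftUnitor.
Variable e : sobj F Tm.

Lemma lunitor_E : Ecl F (qbox J e ∘ (qJ ⊗⊗ idm (sob e))).
Proof. by apply: E_comp; [apply: HEtens; apply: fe_E | apply: qbox_E]. Qed.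

Lemma lunitor_square :
  sarr (box J e) ∘ (qbox J e ∘ (qJ ⊗⊗ idm (sob e))) = sarr e ∘ lam MC (sob e).
Proof.
rewrite comp_assoc sarr_qbox -(comp_assoc mu) -tens1_comp comp_id_r sarr_qJ.
by rewrite tens1_split_lr comp_assoc munit_l lam_nat.
Qed.

Definition slunitor : hom (sob (box J e)) (sob e) :=
  diag lunitor_E (sarr_M e) lunitor_square.

Lemma slunitor_q : slunitor ∘ (qbox J e ∘ (qJ ⊗⊗ idm (sob e))) = lam MC (sob e).
Proof. exact: diag_upper. Qed.

Lemma slunitor_smor : is_smor slunitor.
Proof. exact: diag_lower. Qed.

End LeftUnitor.

Lemma sarr_runitor (S : sobj F Tm) : sarr (box S J) ∘ runitor S = sarr S.
Proof.
rewrite /runitor !comp_assoc sarr_qbox -(comp_assoc mu) -tens1_comp comp_id_r sarr_qJ.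
rewrite tens1_split_rl -!comp_assoc (comp_assoc mu) munit_r.
by rewrite -rho_inv_nat comp_assoc rho_iso2 comp_id_l.
Qed.

Lemma slice_triangle (S e : sobj F Tm) :
  boxr S (slunitor_smor e) ∘ sassoc S J e ∘ qbox (box S J) e ∘ (runitor S ⊗⊗ idm (sob e))
  = qbox S e.
Proof.
have [Ha _] := sassoc_is S J e.
have [Hb _] := boxr_is S (slunitor_smor e).
rewrite /runitor !tens1_compl !comp_assoc (comp_congr3l _ Ha) !comp_assoc.
rewrite (comp_congr2l _ (alpha_nat _ _ _ _)) !comp_assoc Hb !fuse_tens1_idl slunitor_q.
by rewrite (comp_congr2l _ (triangle _ _ _)) fuse_tens1_idr rho_iso2 tens1_id comp_id_r.
Qed.

End Slice.

Section GradedOperations.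
Variables (C : category) (MC : monoidal C) (PC : fin_products C) (F : ofs C)
  (Tm : monoid MC).
Hypothesis HEtens : forall (S : sobj F Tm) (A B : C) (e : hom A B),
  Ecl F e -> Ecl F (tens1 MC e (idm (sob S))).
Hypothesis Hrun : forall S : sobj F Tm, is_iso (runitor S).
Hypothesis Hcanon : forall (n : nat) (X : 'I_n -> C) (Y : C), Ecl F (canon MC PC X Y).
Hypothesis Hprod : forall (n : nat) (X Y : 'I_n -> C) (f : forall i, hom (X i) (Y i)),
  (forall i, Ecl F (f i)) -> Ecl F (prodmap PC f).
Variables (n : nat) (phi : hom (powo PC (mT Tm) n) (mT Tm)).
Hypothesis Hphi : alg_op phi.
Variables (R : 'I_n -> sobj F Tm) (R' : sobj F Tm).

Local Notation "A ⊗ B" := (tens0 MC A B) (at level 35).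
Local Notation "f ⊗⊗ g" := (tens1 MC f g) (at level 35).
Local Notation mu := (mmu Tm).
Local Notation J := (Jobj F Tm).
Local Notation prodR := (prodo PC (fun i => sob (R i))).

Definition lifts_phi (p : hom prodR (sob R')) : Prop :=
  sarr R' ∘ p = phi ∘ prodmap PC (fun i => sarr (R i)).

Definition qprod (e : sobj F Tm) : hom (prodR ⊗ sob e) (prodo PC (fun i => sob (box (R i) e))) :=
  locked (prodmap PC (fun i => qbox (R i) e) ∘ canon MC PC (fun i => sob (R i)) (sob e)).

Lemma qprodE e :
  qprod e = prodmap PC (fun i => qbox (R i) e) ∘ canon MC PC (fun i => sob (R i)) (sob e).
Proof. by rewrite /qprod -lock. Qed.

Lemma qprod_E e : Ecl F (qprod e).
Proof. by rewrite qprodE; apply: E_comp; [apply: Hcanon | apply: Hprod => i; apply: qbox_E]. Qed.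

Lemma proj_qprod e i : proj PC _ i ∘ qprod e = qbox (R i) e ∘ (proj PC _ i ⊗⊗ idm (sob e)).
Proof. by rewrite qprodE comp_assoc proj_prodmap -comp_assoc proj_canon. Qed.

Section FromMap.
Variables (p : hom prodR (sob R')) (Hp : lifts_phi p).

Lemma psi_of_map_square e :
  (phi ∘ prodmap PC (fun i => sarr (box (R i) e))) ∘ qprod e
  = sarr (box R' e) ∘ (qbox R' e ∘ (p ⊗⊗ idm (sob e))).
Proof.
rewrite qprodE !comp_assoc -(comp_assoc phi) prodmap_comp.
rewrite (prodmap_ext PC (fun i => sarr_qbox (R i) e)) alg_op_nat // -Hp sarr_qbox.
by rewrite -comp_assoc -tens1_comp comp_id_r.
Qed.

Definition psi_of_map : graded_family PC R R' :=
  fun e => diag (qprod_E e) (sarr_M (box R' e)) (psi_of_map_square e).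

Lemma psi_of_map_q e : psi_of_map e ∘ qprod e = qbox R' e ∘ (p ⊗⊗ idm (sob e)).
Proof. exact: diag_upper. Qed.

Lemma psi_of_map_grades : grades psi_of_map phi.
Proof. by move=> e; apply: diag_lower. Qed.

Lemma psi_of_map_natural : gf_natural psi_of_map.
Proof.
move=> e e' f _ d d' Hd [Hd'q Hd's].
apply: (ofs_cancel (qprod_E e) (sarr_M (box R' e'))).
- have Hdq : prodmap PC d ∘ qprod e = qprod e' ∘ (idm _ ⊗⊗ f).
    rewrite !qprodE comp_assoc prodmap_comp (prodmap_ext PC (fun i => proj1 (Hd i))).
    by rewrite -prodmap_comp -!comp_assoc -[idm prodR]prodmap_idm canon_nat.
  rewrite -comp_assoc Hdq comp_assoc psi_of_map_q -comp_assoc tens1_interchange.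
  by rewrite -(comp_assoc d') psi_of_map_q !comp_assoc Hd'q.
- rewrite !comp_assoc psi_of_map_grades Hd's psi_of_map_grades prodmap_compl.
  by congr (_ ∘ _); apply: prodmap_ext => i; case: (Hd i).
Qed.

Lemma psi_of_map_algebraic : gf_algebraic psi_of_map.
Proof.
move=> e e' a a' Ha [Ha'q Ha's].
apply: (ofs_cancel (HEtens e' (qprod_E e)) (sarr_M (box R' (box e e')))).
- have Haq : prodmap PC a ∘ (prodmap PC (fun i => qbox (box (R i) e) e')
        ∘ (canon MC PC (fun i => sob (box (R i) e)) (sob e') ∘ (qprod e ⊗⊗ idm (sob e'))))
      = qprod (box e e') ∘ (idm _ ⊗⊗ qbox e e') ∘ alpha MC _ _ _.
    apply: prod_ext => i.
    rewrite [LHS]comp_assoc proj_prodmap -[LHS]comp_assoc (comp_assoc (proj _ _ _) (prodmap _ _)).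
    rewrite proj_prodmap -comp_assoc (comp_assoc (proj _ _ _) (canon _ _ _ _)) proj_canon.
    rewrite -tens1_compl (proj_qprod e i) tens1_compl !comp_assoc; case: (Ha i) => -> _.
    by rewrite -!comp_assoc alpha_nat tens1_id !comp_assoc proj_qprod tens1_interchangel.
  rewrite -!comp_assoc Haq !comp_assoc psi_of_map_q tens1_interchangel alpha_nat_l.
  by rewrite fuse_tens1_idr psi_of_map_q tens1_compl !comp_assoc Ha'q.
- rewrite !comp_assoc psi_of_map_grades Ha's sarr_qbox -(comp_assoc mu) -tens1_comp.
  rewrite comp_id_r psi_of_map_grades -alg_op_nat // !prodmap_compl.
  congr (_ ∘ _ ∘ _); apply: prodmap_ext => i.
  by rewrite comp_assoc; case: (Ha i) => _ ->; apply: sarr_qbox.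
Qed.

End FromMap.

Definition runitor_inv (S : sobj F Tm) : hom (sob (box S J)) (sob S) :=
  proj1_sig (constructive_indefinite_description _ (Hrun S)).

Lemma runitor_invK (S : sobj F Tm) : runitor_inv S ∘ runitor S = idm (sob S).
Proof. by rewrite /runitor_inv; case: constructive_indefinite_description => ? []. Qed.

Lemma runitorK (S : sobj F Tm) : runitor S ∘ runitor_inv S = idm (sob (box S J)).
Proof. by rewrite /runitor_inv; case: constructive_indefinite_description => ? []. Qed.

Lemma sarr_runitor_inv (S : sobj F Tm) : sarr S ∘ runitor_inv S = sarr (box S J).
Proof. by rewrite -sarr_runitor -comp_assoc runitorK comp_id_r. Qed.

Lemma prodmap_runitor :
  prodmap PC (fun i => runitor (R i)) = qprod J ∘ (idm prodR ⊗⊗ qJ F Tm) ∘ rho_inv MC prodR.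
Proof.
apply: prod_ext => i.
rewrite proj_prodmap !comp_assoc proj_qprod tens1_interchangel /runitor -!comp_assoc.
by rewrite -rho_inv_nat.
Qed.

Section FromFamily.
Variable psi : graded_family PC R R'.

Definition map_of_psi : hom prodR (sob R') :=
  runitor_inv R' ∘ psi J ∘ prodmap PC (fun i => runitor (R i)).

Lemma map_of_psi_graded : grades psi phi -> lifts_phi map_of_psi.
Proof.
move=> Hg; rewrite /lifts_phi /map_of_psi !comp_assoc sarr_runitor_inv Hg prodmap_compl.
by congr (_ ∘ _); apply: prodmap_ext => i; apply: sarr_runitor.
Qed.

Lemma map_of_psi_q : graded_alg_op psi ->
  forall e, psi e ∘ qprod e = qbox R' e ∘ (map_of_psi ⊗⊗ idm (sob e)).
Proof.
move=> [Hnat Halg] e.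
have Hrun_psi : runitor R' ∘ map_of_psi = psi J ∘ prodmap PC (fun i => runitor (R i)).
  by rewrite /map_of_psi !comp_assoc runitorK comp_id_l.
have HQ : prodmap PC (fun i => boxr (R i) (slunitor_smor HEtens e))
      ∘ prodmap PC (fun i => sassoc HEtens (R i) J e)
      ∘ prodmap PC (fun i => qbox (box (R i) J) e)
      ∘ canon MC PC (fun i => sob (box (R i) J)) (sob e)
      ∘ (prodmap PC (fun i => runitor (R i)) ⊗⊗ idm (sob e)) = qprod e.
  rewrite -[LHS]comp_assoc canon_nat !comp_assoc !prodmap_comp qprodE.
  by congr (_ ∘ _); apply: prodmap_ext => i; apply: slice_triangle.
have Alg := Halg J e _ _ (fun i => sassoc_is HEtens (R i) J e) (sassoc_is HEtens R' J e).
have Nat := Hnat _ _ _ (slunitor_smor HEtens e) _ _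
  (fun i => boxr_is (R i) (slunitor_smor HEtens e)) (boxr_is R' (slunitor_smor HEtens e)).
rewrite -HQ !comp_assoc Nat (comp_congr4l _ Alg) !comp_assoc fuse_tens1_idr -Hrun_psi.
by rewrite tens1_compl !comp_assoc slice_triangle.
Qed.

End FromFamily.

Lemma map_of_psi_of_map (p : hom prodR (sob R')) (Hp : lifts_phi p) :
  map_of_psi (psi_of_map Hp) = p.
Proof.
rewrite /map_of_psi prodmap_runitor !comp_assoc (comp_congr2l _ (psi_of_map_q Hp J)).
rewrite !comp_assoc tens1_interchangel -!comp_assoc -rho_inv_nat !comp_assoc.
by have := runitor_invK R'; rewrite /runitor !comp_assoc => ->; apply: comp_id_l.
Qed.

Lemma psi_of_map_of_psi (psi : graded_family PC R R') (Hpsi : graded_alg_op psi)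
    (Hg : grades psi phi) :
  psi_of_map (map_of_psi_graded Hg) = psi.
Proof.
apply: functional_extensionality_dep => e.
apply: (ofs_cancel (qprod_E e) (sarr_M (box R' e))).
- by rewrite psi_of_map_q map_of_psi_q.
- by rewrite psi_of_map_grades Hg.
Qed.

Definition graded_op_of_map (p : {p | lifts_phi p}) :
    {psi : graded_family PC R R' | graded_alg_op psi /\ grades psi phi} :=
  exist _ (psi_of_map (proj2_sig p))
    (conj (conj (psi_of_map_natural (proj2_sig p)) (psi_of_map_algebraic (proj2_sig p)))
          (psi_of_map_grades (proj2_sig p))).

Definition map_of_graded_op
    (psi : {psi : graded_family PC R R' | graded_alg_op psi /\ grades psi phi}) :
    {p | lifts_phi p} :=
  exist _ (map_of_psi (proj1_sig psi)) (map_of_psi_graded (proj2 (proj2_sig psi))).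

Lemma graded_op_of_map_bij : bijective graded_op_of_map.
Proof.
exists map_of_graded_op => [[p Hp] | [psi [Hpsi Hg]]];
  apply: eq_sig_hprop => [? ? ? | /=]; try exact: proof_irrelevance.
- exact: map_of_psi_of_map.
- exact: psi_of_map_of_psi.
Qed.

End GradedOperations.

Theorem lemma5p5 (C : category) (MC : monoidal C) (PC : fin_products C)
  (F : ofs C) (Tm : monoid MC)
  (HEtens : forall (S : sobj F Tm) (A B : C) (e : hom A B),
      Ecl F e -> Ecl F (tens1 MC e (idm (sob S))))
  (Hmon : slice_is_monoidal F Tm)
  (Hcanon : forall (n : nat) (X : 'I_n -> C) (Y : C), Ecl F (canon MC PC X Y))
  (Hprod : forall (n : nat) (X Y : 'I_n -> C) (f : forall i, hom (X i) (Y i)),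
      (forall i, Ecl F (f i)) -> Ecl F (prodmap PC f))
  (n : nat) (phi : hom (powo PC (mT Tm) n) (mT Tm)) (Hphi : @alg_op C MC PC Tm n phi)
  (R : 'I_n -> sobj F Tm) (R' : sobj F Tm) :
  exists f : {p : hom (prodo PC (fun i => sob (R i))) (sob R')
               | sarr R' ∘ p = phi ∘ prodmap PC (fun i => sarr (R i))}
             -> {psi : graded_family PC R R'
               | graded_alg_op psi /\ grades psi phi},
    bijective f.
Proof.
have [_ [Hrun _]] := Hmon.
by eexists; apply: (graded_op_of_map_bij HEtens Hrun Hcanon Hprod Hphi).
Qed.
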